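(* $\det(AA^\top)\ge\rho(A)^{2n}$.
   Context: $A=[a_1|\cdots|a_m]\in\mathbb{R}^{n\times m}$ has columns of unit Euclidean norm and $\{A\lambda:\lambda\ge0\}=\mathbb{R}^n$. For a matrix $M$, $\|M\|_{1,2}:=\max_{\|w\|_1=1}\|Mw\|_2$. Define $\rho(A):=\min_{\Delta A\in\mathbb{R}^{n\times m}}\{\|\Delta A\|_{1,2}:\ \exists\,v\neq0 \text{ with } (A+\Delta A)^\top v\le0\}$. *)

From HB Require Import structures.
From mathcomp Require Import all_boot all_order all_algebra.
Set Implicit Arguments. Unset Strict Implicit. Unset Printing Implicit Defensive.
Import Order.TTheory GRing.Theory Num.Theory.
Local Open Scope ring_scope.

Definition norm2 (R : rcfType) (k : nat) (x : 'cV[R]_k) : R :=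
  Num.sqrt (\sum_(i < k) x i 0 ^+ 2).

Definition norm1 (R : rcfType) (k : nat) (x : 'cV[R]_k) : R :=
  \sum_(i < k) `|x i 0|.

Definition is_norm12 (R : rcfType) (n m : nat) (M : 'M[R]_(n, m)) (r : R) : Prop :=
  (exists w : 'cV[R]_m, norm1 w = 1 /\ norm2 (M *m w) = r) /\
  (forall w : 'cV[R]_m, norm1 w = 1 -> norm2 (M *m w) <= r).

Definition rho_feasible (R : rcfType) (n m : nat) (A : 'M[R]_(n, m)) (s : R) : Prop :=
  exists dA : 'M[R]_(n, m), is_norm12 dA s /\
    exists v : 'cV[R]_n, v != 0 /\ forall j : 'I_m, ((A + dA)^T *m v) j 0 <= 0.

Definition is_rho (R : rcfType) (n m : nat) (A : 'M[R]_(n, m)) (r : R) : Prop :=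
  rho_feasible A r /\ (forall s, rho_feasible A s -> r <= s).

From HB Require Import structures.
From mathcomp Require Import all_boot all_order all_algebra.
From mathcomp Require Import ring lra.
Set Implicit Arguments. Unset Strict Implicit. Unset Printing Implicit Defensive.
Import Order.TTheory GRing.Theory Num.Theory.
Local Open Scope ring_scope.

(* For x <> 0, subtracting the rank-one matrix (|A^T x| / |x|^2) x 1^T from A
   pushes every entry of A^T x down by |A^T x| >= max_j |(A^T x)_j|, at cost
   |A^T x| / |x| in the (1,2)-norm.  Hence rho(A) |x| <= |A^T x|, i.e.
   A A^T >= rho(A)^2 I in the Loewner order, and a symmetric M >= c I with
   c > 0 has det M >= c^n: the Schur complement of the top-left entry again
   dominates c I.  Finally rho(A) > 0 because A spans R^n positively: were
   dA = 0 feasible, v = A lam with lam >= 0 would give |v|^2 = lam^T A^T v <= 0. *)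

Lemma trmx11 (T : Type) (u : 'M[T]_1) : u^T = u.
Proof. by apply/matrixP=> i j; rewrite !ord1 mxE. Qed.

Lemma det_block_scalar (F : fieldType) n (a : F) (b : 'rV_n) (d : 'cV_n) (D : 'M_n) :
  a != 0 ->
  \det (block_mx a%:M b d D : 'M_(1 + n)) = a * \det (D - a^-1 *: (d *m b)).
Proof.
move=> a0; pose L : 'M[F]_(1 + n) := block_mx 1%:M 0 (a^-1 *: d) 1%:M.
have -> : block_mx a%:M b d D = L *m block_mx a%:M b 0 (D - a^-1 *: (d *m b)).
  rewrite mulmx_block !mul1mx !mul0mx !addr0 -!scalemxAl addrC subrK.
  by rewrite mul_mx_scalar scalerA mulVf // scale1r.
by rewrite det_mulmx det_lblock det_ublock !det1 det_scalar1 !mul1r.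
Qed.

Section Quadratic.
Variable R : realFieldType.

Definition scalar_le_mx n (c : R) (M : 'M[R]_n) :=
  forall x : 'cV_n, c * (x^T *m x) 0 0 <= (x^T *m M *m x) 0 0.

Lemma dot_col_mx_scalar n (t : R) (y : 'cV_n) :
  ((col_mx t%:M y)^T *m col_mx t%:M y) 0 0 = t ^+ 2 + (y^T *m y) 0 0.
Proof. by rewrite tr_col_mx mul_row_col trmx11 mul_scalar_mx !mxE eqxx mulr1n expr2. Qed.

Lemma qf_block_scalar n (a t : R) (b : 'rV_n) (D : 'M_n) (y : 'cV_n) :
  ((col_mx t%:M y)^T *m block_mx a%:M b b^T D *m col_mx t%:M y) 0 0
  = a * t ^+ 2 + 2 * t * (b *m y) 0 0 + (y^T *m D *m y) 0 0.
Proof.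
rewrite tr_col_mx mul_row_block mul_row_col trmx11 !mulmxDl.
rewrite -trmx_mul mul_mx_scalar !mul_scalar_mx -scalemxAl.
rewrite [b *m y]mx11_scalar trmx11 mul_scalar_mx !mxE !eqxx !mulr1n /=.
ring.
Qed.

Lemma qf_schur n (a : R) (b : 'rV_n) (D : 'M_n) (y : 'cV_n) :
  (y^T *m (D - a^-1 *: (b^T *m b)) *m y) 0 0
  = (y^T *m D *m y) 0 0 - a^-1 * (b *m y) 0 0 ^+ 2.
Proof.
rewrite mulmxBr mulmxBl -scalemxAr -scalemxAl.
have -> : y^T *m (b^T *m b) *m y = (b *m y)^T *m (b *m y) by rewrite trmx_mul !mulmxA.
rewrite [b *m y]mx11_scalar trmx11.
by rewrite mul_scalar_mx !mxE eqxx mulr1n expr2.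
Qed.

Lemma scalar_le_mx_block n (c a : R) (b : 'rV_n) (D : 'M_n) : 0 < c ->
  scalar_le_mx c (block_mx a%:M b b^T D) ->
  c <= a /\ scalar_le_mx c (D - a^-1 *: (b^T *m b)).
Proof.
move=> c_gt0 hM; have c_le_a : c <= a.
  have := hM (col_mx 1%:M 0).
  by rewrite dot_col_mx_scalar qf_block_scalar trmx0 !mulmx0 !mxE; lra.
split=> // y; set beta := (b *m y) 0 0.
have a_neq0 : a != 0 by rewrite gt_eqF // (lt_le_trans c_gt0).
have := hM (col_mx (- (a^-1 * beta))%:M y).
rewrite dot_col_mx_scalar qf_block_scalar qf_schur -/beta.
have -> : a * (- (a^-1 * beta)) ^+ 2 + 2 * - (a^-1 * beta) * beta = - (a^-1 * beta ^+ 2).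
  by field.
have : 0 <= c * (- (a^-1 * beta)) ^+ 2 by rewrite mulr_ge0 ?sqr_ge0 ?ltW.
lra.
Qed.

Lemma det_ge_scalar_le_mx n (c : R) (M : 'M[R]_n) : 0 < c -> M^T = M ->
  scalar_le_mx c M -> c ^+ n <= \det M.
Proof.
elim: n M => [|n IHn] M c_gt0 M_sym hM; first by rewrite det_mx00 expr0.
set a := @ulsubmx _ 1 n 1 n M 0 0; set b := @ursubmx _ 1 n 1 n M.
set D := @drsubmx _ 1 n 1 n M.
have D_sym : D^T = D by rewrite /D trmx_drsub M_sym.
have eM : M = block_mx a%:M b b^T D.
  by rewrite /a -mx11_scalar /b trmx_ursub M_sym submxK.
rewrite eM in hM *.
have [c_le_a hS] := scalar_le_mx_block c_gt0 hM.
rewrite det_block_scalar ?gt_eqF ?(lt_le_trans c_gt0) // exprS.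
apply: ler_pM => //; [exact: ltW | exact: exprn_ge0 (ltW c_gt0) |].
by apply: IHn; rewrite // linearB /= linearZ /= trmx_mul trmxK D_sym.
Qed.
End Quadratic.

Section Norms.
Variable R : rcfType.
Implicit Types (k : nat).

Lemma dot_self_sum k (x : 'cV[R]_k) : (x^T *m x) 0 0 = \sum_(i < k) x i 0 ^+ 2.
Proof. by rewrite mxE; apply: eq_bigr => i _; rewrite mxE expr2. Qed.

Lemma norm2_ge0 k (x : 'cV[R]_k) : 0 <= norm2 x.
Proof. exact: sqrtr_ge0. Qed.

Lemma norm2_sqr k (x : 'cV[R]_k) : norm2 x ^+ 2 = (x^T *m x) 0 0.
Proof. by rewrite dot_self_sum sqr_sqrtr // sumr_ge0 // => i _; rewrite sqr_ge0. Qed.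

Lemma norm2_eq0 k (x : 'cV[R]_k) : (norm2 x == 0) = (x == 0).
Proof.
apply/idP/eqP => [|->]; last by rewrite /norm2 big1 ?sqrtr0 // => i _; rewrite mxE expr0n.
have sq_ge0 i : 0 <= x i 0 ^+ 2 := sqr_ge0 _.
rewrite /norm2 sqrtr_eq0 => sum_le0.
have sum0 : \sum_i x i 0 ^+ 2 = 0 by apply/eqP; rewrite eq_le sum_le0 sumr_ge0.
apply/matrixP => i j; rewrite ord1 mxE; apply/eqP.
by rewrite -sqrf_eq0 (psumr_eq0P (fun i _ => sq_ge0 i) sum0).
Qed.

Lemma norm2_gt0 k (x : 'cV[R]_k) : x != 0 -> 0 < norm2 x.
Proof. by rewrite -norm2_eq0 lt_def norm2_ge0 andbT. Qed.

Lemma norm2Z k (a : R) (x : 'cV[R]_k) : norm2 (a *: x) = `|a| * norm2 x.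
Proof.
rewrite /norm2; under eq_bigr do rewrite mxE exprMn.
by rewrite -mulr_sumr sqrtrM ?sqr_ge0 // sqrtr_sqr.
Qed.

Lemma norm_entry_le_norm2 k (x : 'cV[R]_k) i : `|x i 0| <= norm2 x.
Proof.
rewrite /norm2 -sqrtr_sqr ler_sqrt; last by rewrite sumr_ge0 // => j _; rewrite sqr_ge0.
by rewrite (bigD1 i) //= lerDl sumr_ge0 // => j _; rewrite sqr_ge0.
Qed.

Lemma norm1_delta k (j : 'I_k) : norm1 (delta_mx j 0 : 'cV[R]_k) = 1.
Proof.
rewrite /norm1 (bigD1 j) //= mxE !eqxx /= mulr1n normr1 big1 ?addr0 //.
by move=> i /negbTE ij; rewrite mxE ij normr0.
Qed.

Lemma is_norm12_dim_gt0 n m (M : 'M[R]_(n, m)) s : is_norm12 M s -> (0 < m)%N.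
Proof.
case: m M => // M [[w [w1 _]] _]; move: w1.
by rewrite /norm1 big_ord0 => /eqP; rewrite eq_sym oner_eq0.
Qed.

Lemma is_norm12_eq0 n m (M : 'M[R]_(n, m)) : is_norm12 M 0 -> M = 0.
Proof.
move=> [_ hM]; apply/matrixP => i j; rewrite mxE.
have Mj0 : M *m (delta_mx j 0 : 'cV_m) = 0.
  by apply/eqP; rewrite -norm2_eq0 eq_le (hM _ (norm1_delta j)) norm2_ge0.
by move/matrixP/(_ i 0): Mj0; rewrite -colE !mxE.
Qed.

Lemma is_norm12_rank1 n m (u : 'cV[R]_n) : (0 < m)%N ->
  is_norm12 (u *m const_mx 1 : 'M_(n, m)) (norm2 u).
Proof.
move=> m_gt0; have uw w : u *m const_mx 1 *m w = (\sum_j w j 0) *: u.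
  rewrite -mulmxA [const_mx 1 *m w]mx11_scalar mul_mx_scalar mxE.
  by under eq_bigr do rewrite mxE mul1r.
split=> [|w w1]; last first.
  by rewrite uw norm2Z -[leRHS]mul1r -w1 ler_wpM2r ?norm2_ge0 // ler_norm_sum.
pose j0 := Ordinal m_gt0; exists (delta_mx j0 0); rewrite norm1_delta uw norm2Z.
rewrite (bigD1 j0) //= big1 => [|j /negbTE j_neq]; last by rewrite mxE j_neq.
by rewrite mxE !eqxx addr0 normr1 mul1r.
Qed.

End Norms.

Definition pos_spanning (R : rcfType) n m (A : 'M[R]_(n, m)) :=
  forall b : 'cV[R]_n, exists lam : 'cV[R]_m,
    (forall j : 'I_m, 0 <= lam j 0) /\ A *m lam = b.

Section Rho.
Variables (R : rcfType) (n m : nat) (A : 'M[R]_(n, m)).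

Lemma pos_spanning_dual_eq0 (v : 'cV[R]_n) : pos_spanning A ->
  (forall j, (A^T *m v) j 0 <= 0) -> v = 0.
Proof.
move=> hA hv; have [lam [lam_ge0 Alam]] := hA v.
have : (v^T *m v) 0 0 <= 0.
  rewrite -{1}Alam trmx_mul -mulmxA mxE.
  by apply: sumr_le0 => j _; rewrite mxE mulr_ge0_le0.
rewrite -norm2_sqr => v_le0; apply/eqP.
by rewrite -norm2_eq0 -sqrf_eq0 eq_le v_le0 sqr_ge0.
Qed.

Lemma rho_feasible_gt0 s : pos_spanning A -> rho_feasible A s -> 0 < s.
Proof.
move=> hA [dA [hdA [v [v_neq0 hv]]]].
have s_ge0 : 0 <= s by have [[w [_ <-]] _] := hdA; exact: norm2_ge0.
rewrite lt_def s_ge0 andbT; apply: contra v_neq0 => /eqP s0.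
move: hdA hv; rewrite s0 => /is_norm12_eq0 ->; rewrite addr0 => hv.
by rewrite (pos_spanning_dual_eq0 hA hv).
Qed.

Lemma rho_feasible_ratio (x : 'cV[R]_n) : (0 < m)%N -> x != 0 ->
  rho_feasible A (norm2 (A^T *m x) / norm2 x).
Proof.
move=> m_gt0 x_neq0; set t := norm2 (A^T *m x); set nu := norm2 x.
have nu_gt0 : 0 < nu := norm2_gt0 x_neq0.
pose u := - (t / nu ^+ 2) *: x.
have uTx : u^T *m x = (- t)%:M.
  rewrite /u linearZ /= -scalemxAl [x^T *m x]mx11_scalar -norm2_sqr -/nu.
  by rewrite scale_scalar_mx; congr _%:M; field; rewrite gt_eqF.
exists (u *m const_mx 1); split.
  have -> : t / nu = norm2 u.
    rewrite norm2Z normrN ger0_norm ?divr_ge0 ?norm2_ge0 ?exprn_ge0 ?norm2_ge0 //.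
    by rewrite -/nu; field; rewrite gt_eqF.
  exact: is_norm12_rank1.
exists x; split=> // j.
rewrite linearD /= mulmxDl trmx_mul -mulmxA uTx mul_mx_scalar.
have := norm_entry_le_norm2 (A^T *m x) j; have := ler_norm ((A^T *m x) j 0).
set g := A^T *m x; rewrite -/t !mxE; lra.
Qed.

Lemma is_rho_scalar_le_mx r : is_rho A r -> 0 <= r ->
  scalar_le_mx (r ^+ 2) (A *m A^T).
Proof.
move=> [[dA [hdA _]] r_min] r_ge0 x.
have m_gt0 := is_norm12_dim_gt0 hdA.
have -> : x^T *m (A *m A^T) *m x = (A^T *m x)^T *m (A^T *m x).
  by rewrite trmx_mul trmxK !mulmxA.
have [-> | x_neq0] := eqVneq x 0; first by rewrite !(mulmx0, trmx0, mul0mx) mxE mulr0.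
rewrite -!norm2_sqr -exprMn.
have := r_min _ (rho_feasible_ratio m_gt0 x_neq0).
rewrite ler_pdivlMr ?norm2_gt0 // => r_le.
by rewrite !expr2 ler_pM // mulr_ge0 // norm2_ge0.
Qed.

End Rho.

Theorem proposition11 (R : rcfType) (n m : nat) (A : 'M[R]_(n, m)) (r : R)
  (hunit : forall j : 'I_m, norm2 (col j A) = 1)
  (hcone : forall b : 'cV[R]_n, exists lam : 'cV[R]_m,
             (forall j : 'I_m, 0 <= lam j 0) /\ A *m lam = b)
  (hrho : is_rho A r) :
  r ^+ (2 * n) <= \det (A *m A^T).
Proof.
(* The bound does not need the columns of A to have unit norm. *)
have r_gt0 : 0 < r := rho_feasible_gt0 hcone hrho.1.
rewrite exprM; apply: det_ge_scalar_le_mx.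
- exact: exprn_gt0.
- by rewrite trmx_mul trmxK.
- exact: is_rho_scalar_le_mx (ltW r_gt0).
Qed.
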